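(* The multiplicity of $\vartheta[m]$ along $q_\nu=0$ ($\nu=0,2,1$ respectively) in the coordinates $$q_0=e^{2\pi i (z_0+z_1)/8},\quad q_2=e^{2\pi i (z_2+z_1)/8},\quad q_1=e^{-2\pi i z_1/8}$$ is $$a_1,\quad a_2,\quad a_1+a_2-2a_1a_2,\qquad m={a\choose b},\ a={a_1\choose a_2}.$$
   Context: Genus two, $Z=\begin{pmatrix}z_0&z_1\\ z_1&z_2\end{pmatrix}\in\mathbb{H}_2$. For a theta characteristic $m={a\choose b}$, $a,b\in\{0,1\}^2$, the theta constant is $\vartheta[m](Z)=\sum_{g\in\mathbb{Z}^2}e^{\pi i(Z[g+a/2]+{}^tb(g+a/2))}$. These are periodic under $Z\mapsto Z+8S$, $S$ integral symmetric, so they can be written as Laurent series in the normal coordinates $q_0,q_1,q_2$ above; these are in fact power series, hence extend holomorphically to the completed Reinhardt domain $\tilde D=D\cup\{q\in\mathbb{C}^3;\ q_0q_1q_2=0\}$, where $D$ is the image of $\mathbb{H}_2$ under $Z\mapsto(q_0,q_1,q_2)$. The multiplicity refers to the vanishing order of this power series along the divisor $q_\nu=0$ (with $a_1,a_2\in\{0,1\}\subset\mathbb{Z}$). *)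

From Stdlib Require Import Reals ZArith.
From Coquelicot Require Import Coquelicot.
Open Scope R_scope.

Definition cexp (z : C) : C :=
  (exp (Re z) * cos (Im z), exp (Re z) * sin (Im z)).

(* A point Z = [[z0, z1], [z1, z2]] of the Siegel upper half space H_2:
   symmetric with positive definite imaginary part. *)
Definition in_H2 (z0 z1 z2 : C) : Prop :=
  0 < Im z0 /\ 0 < Im z0 * Im z2 - Im z1 * Im z1.

(* Summand of the theta series for characteristic m = (a ; b), a = (a1,a2),
   b = (b1,b2), at g = (g1,g2) in Z^2:
   exp(pi i (Z[g + a/2] + b^t (g + a/2))). *)
Definition theta_term (a1 a2 b1 b2 : nat) (z0 z1 z2 : C) (g1 g2 : Z) : C :=
  let x1 : R := IZR g1 + INR a1 / 2 in
  let x2 : R := IZR g2 + INR a2 / 2 in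
  let ZX : C := Cplus (Cplus (Cmult z0 (RtoC (x1 * x1)))
                             (Cmult z1 (RtoC (2 * x1 * x2))))
                      (Cmult z2 (RtoC (x2 * x2))) in
  let bx : R := INR b1 * x1 + INR b2 * x2 in
  cexp (Cmult (Cmult (RtoC PI) Ci) (Cplus ZX (RtoC bx))).

Definition theta_partial (a1 a2 b1 b2 : nat) (z0 z1 z2 : C) (N : nat) : C :=
  sum_n (fun i : nat => sum_n (fun j : nat =>
     theta_term a1 a2 b1 b2 z0 z1 z2
       (Z.of_nat i - Z.of_nat N)%Z (Z.of_nat j - Z.of_nat N)%Z) (2 * N)) (2 * N).

(* theta[m](Z) = v  (the series is absolutely convergent, so the limit of
   the square partial sums is its value). *)
Definition theta_is (a1 a2 b1 b2 : nat) (z0 z1 z2 : C) (v : C) : Prop :=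
  filterlim (theta_partial a1 a2 b1 b2 z0 z1 z2) eventually (locally v).

Definition q0 (z0 z1 z2 : C) : C :=
  cexp (Cmult (Cmult (RtoC (2 * PI / 8)) Ci) (Cplus z0 z1)).
Definition q2 (z0 z1 z2 : C) : C :=
  cexp (Cmult (Cmult (RtoC (2 * PI / 8)) Ci) (Cplus z2 z1)).
Definition q1 (z0 z1 z2 : C) : C :=
  cexp (Cmult (Cmult (RtoC (- (2 * PI / 8))) Ci) z1).

Definition pterm (c : nat -> nat -> nat -> C) (w0 w1 w2 : C) (n0 n1 n2 : nat) : C :=
  Cmult (Cmult (Cmult (c n0 n1 n2) (pow_n w0 n0)) (pow_n w1 n1)) (pow_n w2 n2).

Definition box_sum (c : nat -> nat -> nat -> C) (w0 w1 w2 : C) (N : nat) : C :=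
  sum_n (fun i => sum_n (fun j => sum_n (fun k => pterm c w0 w1 w2 i j k) N) N) N.

Definition box_abs_sum (c : nat -> nat -> nat -> C) (w0 w1 w2 : C) (N : nat) : R :=
  sum_n (fun i => sum_n (fun j => sum_n (fun k => Cmod (pterm c w0 w1 w2 i j k)) N) N) N.

Definition pseries_sum (c : nat -> nat -> nat -> C) (w0 w1 w2 : C) (v : C) : Prop :=
  (exists M : R, forall N, box_abs_sum c w0 w1 w2 N <= M) /\
  filterlim (box_sum c w0 w1 w2) eventually (locally v).

Definition theta_expansion (a1 a2 b1 b2 : nat) (c : nat -> nat -> nat -> C) : Prop :=
  forall z0 z1 z2 : C, in_H2 z0 z1 z2 ->
    exists v : C, theta_is a1 a2 b1 b2 z0 z1 z2 v /\
      pseries_sum c (q0 z0 z1 z2) (q1 z0 z1 z2) (q2 z0 z1 z2) v.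

Definition mult_q0 (c : nat -> nat -> nat -> C) (k : nat) : Prop :=
  (exists n1 n2, c k n1 n2 <> RtoC 0) /\
  (forall n0 n1 n2, c n0 n1 n2 <> RtoC 0 -> (k <= n0)%nat).
Definition mult_q1 (c : nat -> nat -> nat -> C) (k : nat) : Prop :=
  (exists n0 n2, c n0 k n2 <> RtoC 0) /\
  (forall n0 n1 n2, c n0 n1 n2 <> RtoC 0 -> (k <= n1)%nat).
Definition mult_q2 (c : nat -> nat -> nat -> C) (k : nat) : Prop :=
  (exists n0 n1, c n0 n1 k <> RtoC 0) /\
  (forall n0 n1 n2, c n0 n1 n2 <> RtoC 0 -> (k <= n2)%nat).

(* Put x = g + a/2 and u = 2 x = 2 g + a.  The identity
   Z[x] = (z0 + z1) x1^2 + (z2 + z1) x2^2 - z1 (x1 - x2)^2 turns the term of the theta series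
   at g into e^{pi i b.x} q0^(u1^2) q1^((u1 - u2)^2) q2^(u2^2).  The terms decay like a
   Gaussian, so collecting equal monomials gives an absolutely convergent power series in q, and
   it is the only one: for a power series vanishing on (0,1)^3, at suitable small positive points
   the lexicographically lowest coefficient dominates all the others.
   Since u_k has the parity of a_k, the exponents are at least a1, a1 + a2 - 2 a1 a2 and a2; these
   minima are attained exactly at u = +-a, and all those terms have real part
   cos (pi (a1 b1 + a2 b2) / 2) = +-1 (this is where a.b even is needed), so the lowest
   coefficient does not vanish. *)

From Stdlib Require Import Reals ZArith Lia Lra Psatz Classical FunctionalExtensionality.
From Coquelicot Require Import Coquelicot.
Open Scope R_scope.
Local Open Scope bool_scope.

(** * Finite sums *)

Lemma sum_n_zero {G : AbelianMonoid} (f : nat -> G) n :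
  (forall i, (i <= n)%nat -> f i = zero) -> sum_n f n = zero.
Proof.
  induction n as [|n IH]; intros Hf.
  - rewrite sum_O. now apply Hf.
  - rewrite sum_Sn, (Hf (S n)), IH by (intros; try apply Hf; lia). apply plus_zero_l.
Qed.

Lemma sum_n_extend {G : AbelianMonoid} (f : nat -> G) m n :
  (m <= n)%nat -> (forall i, (m < i <= n)%nat -> f i = zero) -> sum_n f n = sum_n f m.
Proof.
  induction n as [|n IH]; intros Hmn Hf.
  - now replace m with 0%nat by lia.
  - destruct (Nat.eq_dec m (S n)) as [->|Hne]; [reflexivity|].
    rewrite sum_Sn, (Hf (S n)), IH by (intros; try apply Hf; lia). apply plus_zero_r.
Qed.

Lemma sum_n_delta {G : AbelianMonoid} (x : G) e n :
  sum_n (fun k => if Nat.eqb e k then x else zero) n = if Nat.leb e n then x else zero.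
Proof.
  induction n as [|n IH].
  - rewrite sum_O. now destruct e.
  - rewrite sum_Sn, IH.
    destruct (Nat.eqb_spec e (S n)) as [->|Hne].
    + rewrite (proj2 (Nat.leb_nle _ _)), (proj2 (Nat.leb_le _ _)) by lia. apply plus_zero_l.
    + rewrite plus_zero_r.
      destruct (Nat.leb_spec e n), (Nat.leb_spec e (S n)); easy || lia.
Qed.

Lemma sum_n_succ_l {G : AbelianMonoid} (f : nat -> G) n :
  sum_n f (S n) = plus (f O) (sum_n (fun i => f (S i)) n).
Proof. unfold sum_n. rewrite sum_Sn_m, sum_n_m_S by lia. reflexivity. Qed.

Lemma sum_n_Rle (f g : nat -> R) n :
  (forall i, (i <= n)%nat -> f i <= g i) -> sum_n f n <= sum_n g n.
Proof. intros H. rewrite !sum_n_Reals. now apply sum_Rle. Qed.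

Lemma sum_n_Rmult_l (f : nat -> R) a n : sum_n (fun i => a * f i) n = a * sum_n f n.
Proof. exact (sum_n_mult_l (K := R_Ring) a f n). Qed.

Lemma sum_n_Rmult_r (f : nat -> R) a n : sum_n (fun i => f i * a) n = sum_n f n * a.
Proof. exact (sum_n_mult_r (K := R_Ring) a f n). Qed.

Lemma sum_n_nonneg (f : nat -> R) n :
  (forall i, (i <= n)%nat -> 0 <= f i) -> 0 <= sum_n f n.
Proof.
  intros H. apply Rle_trans with (sum_n (fun _ => 0) n).
  - rewrite sum_n_const. lra.
  - now apply sum_n_Rle.
Qed.

Lemma sum_n_term_le (f : nat -> R) n k :
  (k <= n)%nat -> (forall i, (i <= n)%nat -> 0 <= f i) -> f k <= sum_n f n.
Proof.
  induction n as [|n IH]; intros Hk Hf.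
  - replace k with 0%nat by lia. rewrite sum_O. lra.
  - rewrite sum_Sn. change plus with Rplus.
    assert (0 <= sum_n f n) by (apply sum_n_nonneg; intros; apply Hf; lia).
    destruct (Nat.eq_dec k (S n)) as [->|Hne]; [lra|].
    assert (f k <= sum_n f n) by (apply IH; intros; try apply Hf; lia).
    specialize (Hf (S n) (le_n _)). lra.
Qed.

Lemma sum_n_geom_le (l : R) n : 0 <= l < 1 -> sum_n (fun i => l ^ i) n <= / (1 - l).
Proof.
  intros Hl.
  assert (E : sum_n (fun i => l ^ i) n = (1 - l ^ S n) / (1 - l)).
  { induction n as [|n IH].
    - rewrite sum_O. simpl. field. lra.
    - rewrite sum_Sn, IH. change plus with Rplus. simpl. field. lra. }
  rewrite E. unfold Rdiv. rewrite <- (Rmult_1_l (/ (1 - l))) at 2.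
  apply Rmult_le_compat_r. apply Rlt_le, Rinv_0_lt_compat; lra.
  pose proof (pow_le l (S n) ltac:(lra)). lra.
Qed.

Lemma Cmod_sum_n (f : nat -> C) n : Cmod (sum_n f n) <= sum_n (fun i => Cmod (f i)) n.
Proof.
  exact (norm_sum_n_m f 0 n).
Qed.

Lemma sum_n_Cminus (f g : nat -> C) n :
  sum_n (fun k => Cminus (f k) (g k)) n = Cminus (sum_n f n) (sum_n g n).
Proof.
  induction n as [|n IH]; [now rewrite !sum_O|].
  assert (Hswap : forall a b c d : C, Cplus (Cminus a b) (Cminus c d) = Cminus (Cplus a c) (Cplus b d))
    by (intros; ring).
  rewrite !sum_Sn, IH. apply Hswap.
Qed.

Lemma Re_sum_n (f : nat -> C) n : Re (sum_n f n) = sum_n (fun i => Re (f i)) n.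
Proof.
  induction n as [|n IH]; [now rewrite !sum_O|].
  rewrite !sum_Sn, <- IH. reflexivity.
Qed.

Lemma Cmod_zero : Cmod zero = 0.
Proof. apply Cmod_0. Qed.

Lemma Cmod_if_zero_le (b : bool) (x : C) : Cmod (if b then zero else x) <= Cmod x.
Proof. destruct b; [rewrite Cmod_zero; apply Cmod_ge_0|lra]. Qed.

Lemma Cmod_if (b : bool) (x : C) : Cmod (if b then x else zero) = if b then Cmod x else zero.
Proof. destruct b; [reflexivity|apply Cmod_zero]. Qed.

Definition sum_square {G : AbelianMonoid} (F : nat -> nat -> G) (n : nat) : G :=
  sum_n (fun i => sum_n (fun j => F i j) n) n.

Definition sum_cube {G : AbelianMonoid} (F : nat -> nat -> nat -> G) (n : nat) : G :=
  sum_n (fun i => sum_n (fun j => sum_n (fun k => F i j k) n) n) n.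

Lemma sum_square_ext {G : AbelianMonoid} (F F' : nat -> nat -> G) n :
  (forall i j, (i <= n)%nat -> (j <= n)%nat -> F i j = F' i j) ->
  sum_square F n = sum_square F' n.
Proof. intros H. apply sum_n_ext_loc; intros i Hi. apply sum_n_ext_loc; intros j Hj. auto. Qed.

Lemma sum_square_extend {G : AbelianMonoid} (F : nat -> nat -> G) m n :
  (m <= n)%nat -> (forall i j, (m < i \/ m < j)%nat -> F i j = zero) ->
  sum_square F n = sum_square F m.
Proof.
  intros Hmn H. unfold sum_square.
  rewrite (sum_n_extend _ m n) by (auto; intros i Hi; apply sum_n_zero; intros; apply H; lia).
  apply sum_n_ext_loc; intros i Hi. apply sum_n_extend; auto. intros; apply H; lia.
Qed.

Lemma sum_n_sum_square {G : AbelianMonoid} (F : nat -> nat -> nat -> G) m n :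
  sum_n (fun k => sum_square (F k) n) m = sum_square (fun i j => sum_n (fun k => F k i j) m) n.
Proof.
  unfold sum_square. rewrite sum_n_switch. apply sum_n_ext; intros i. apply sum_n_switch.
Qed.

Lemma sum_square_plus {G : AbelianMonoid} (F F' : nat -> nat -> G) n :
  sum_square (fun i j => plus (F i j) (F' i j)) n = plus (sum_square F n) (sum_square F' n).
Proof.
  unfold sum_square. rewrite <- sum_n_plus. apply sum_n_ext; intros i. apply sum_n_plus.
Qed.

Lemma sum_square_split {G : AbelianMonoid} (F : nat -> nat -> G) (p : nat -> nat -> bool) n :
  sum_square F n =
  plus (sum_square (fun i j => if p i j then F i j else zero) n)
       (sum_square (fun i j => if p i j then zero else F i j) n).
Proof.
  rewrite <- sum_square_plus. apply sum_square_ext; intros i j _ _.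
  destruct (p i j); symmetry; [apply plus_zero_r | apply plus_zero_l].
Qed.

Lemma sum_square_mult_r {K : Ring} (F : nat -> nat -> K) a n :
  sum_square (fun i j => mult (F i j) a) n = mult (sum_square F n) a.
Proof.
  unfold sum_square. rewrite <- sum_n_mult_r. apply sum_n_ext; intros i. apply sum_n_mult_r.
Qed.

Lemma sum_square_Rle (F F' : nat -> nat -> R) n :
  (forall i j, (i <= n)%nat -> (j <= n)%nat -> F i j <= F' i j) ->
  sum_square F n <= sum_square F' n.
Proof. intros H. apply sum_n_Rle; intros i Hi. apply sum_n_Rle; intros j Hj. auto. Qed.

Lemma sum_square_prod (f g : nat -> R) n :
  sum_square (fun i j => f i * g j) n = sum_n f n * sum_n g n.
Proof.
  unfold sum_square. rewrite <- sum_n_Rmult_r. apply sum_n_ext; intros i. apply sum_n_Rmult_l.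
Qed.

Lemma sum_square_Rmult_l (F : nat -> nat -> R) a n :
  sum_square (fun i j => a * F i j) n = a * sum_square F n.
Proof.
  unfold sum_square. rewrite <- sum_n_Rmult_l. apply sum_n_ext; intros i. apply sum_n_Rmult_l.
Qed.

Lemma Cmod_sum_square (F : nat -> nat -> C) n :
  Cmod (sum_square F n) <= sum_square (fun i j => Cmod (F i j)) n.
Proof.
  eapply Rle_trans; [apply Cmod_sum_n|]. apply sum_n_Rle; intros. apply Cmod_sum_n.
Qed.

Lemma Re_sum_square (F : nat -> nat -> C) n :
  Re (sum_square F n) = sum_square (fun i j => Re (F i j)) n.
Proof. unfold sum_square. rewrite Re_sum_n. apply sum_n_ext; intros i. apply Re_sum_n. Qed.

Lemma sum_square_tail_le (F : nat -> nat -> C) (p : nat -> nat -> bool) (w : nat -> nat -> R) K t n :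
  (forall i j, 0 <= w i j) -> sum_square w n <= K -> 0 <= t ->
  (forall i j, p i j = false -> Cmod (F i j) <= w i j * t) ->
  Cmod (Cminus (sum_square F n) (sum_square (fun i j => if p i j then F i j else zero) n)) <= K * t.
Proof.
  intros Hw HK Ht HF. rewrite (sum_square_split F p n) at 1.
  assert (Hcancel : forall A B : C, Cminus (Cplus A B) A = B) by (intros; ring).
  change plus with Cplus. rewrite Hcancel.
  eapply Rle_trans; [apply Cmod_sum_square|].
  apply Rle_trans with (sum_square (fun i j => w i j * t) n).
  - apply sum_square_Rle; intros i j _ _. destruct (p i j) eqn:E.
    + rewrite Cmod_zero. specialize (Hw i j). nra.
    + now apply HF.
  - rewrite (sum_square_mult_r (K := R_Ring)). now apply Rmult_le_compat_r.
Qed.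

Lemma sum_cube_delta {G : AbelianMonoid} (x : G) e0 e1 e2 n :
  sum_cube (fun n0 n1 n2 =>
    if Nat.eqb e0 n0 && Nat.eqb e1 n1 && Nat.eqb e2 n2 then x else zero) n =
  if Nat.leb e0 n && Nat.leb e1 n && Nat.leb e2 n then x else zero.
Proof.
  unfold sum_cube.
  rewrite (sum_n_ext _ (fun n0 => if Nat.eqb e0 n0 then
    sum_n (fun n1 => if Nat.eqb e1 n1 then sum_n (fun n2 => if Nat.eqb e2 n2 then x else zero) n
      else zero) n else zero)).
  2:{ intros n0. destruct (Nat.eqb e0 n0); cbn [andb].
      - apply sum_n_ext; intros n1. destruct (Nat.eqb e1 n1); [reflexivity|]. now apply sum_n_zero.
      - apply sum_n_zero; intros. now apply sum_n_zero. }
  rewrite sum_n_delta. destruct (Nat.leb e0 n); [|reflexivity].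
  rewrite sum_n_delta. destruct (Nat.leb e1 n); [|reflexivity].
  apply sum_n_delta.
Qed.

Lemma sum_cube_plus {G : AbelianMonoid} (F F' : nat -> nat -> nat -> G) n :
  sum_cube (fun i j k => plus (F i j k) (F' i j k)) n = plus (sum_cube F n) (sum_cube F' n).
Proof.
  unfold sum_cube. rewrite <- sum_n_plus. apply sum_n_ext; intros i.
  rewrite <- sum_n_plus. apply sum_n_ext; intros j. apply sum_n_plus.
Qed.

Lemma sum_cube_isolate {G : AbelianMonoid} (F : nat -> nat -> nat -> G) k0 k1 k2 n :
  (k0 <= n)%nat -> (k1 <= n)%nat -> (k2 <= n)%nat ->
  sum_cube F n = plus (F k0 k1 k2) (sum_cube (fun n0 n1 n2 =>
    if Nat.eqb k0 n0 && Nat.eqb k1 n1 && Nat.eqb k2 n2 then zero else F n0 n1 n2) n).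
Proof.
  intros H0 H1 H2.
  assert (Hk : sum_cube (fun n0 n1 n2 =>
    if Nat.eqb k0 n0 && Nat.eqb k1 n1 && Nat.eqb k2 n2 then F k0 k1 k2 else zero) n = F k0 k1 k2).
  { rewrite sum_cube_delta, (proj2 (Nat.leb_le _ _) H0), (proj2 (Nat.leb_le _ _) H1),
      (proj2 (Nat.leb_le _ _) H2). reflexivity. }
  rewrite <- Hk, <- sum_cube_plus.
  unfold sum_cube. apply sum_n_ext; intros i. apply sum_n_ext; intros j. apply sum_n_ext; intros k.
  destruct (Nat.eqb_spec k0 i), (Nat.eqb_spec k1 j), (Nat.eqb_spec k2 k); subst; cbn [andb];
    symmetry; first [apply plus_zero_r | apply plus_zero_l].
Qed.

Lemma sum_cube_Rle (F F' : nat -> nat -> nat -> R) n :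
  (forall i j k, F i j k <= F' i j k) -> sum_cube F n <= sum_cube F' n.
Proof. intros H. apply sum_n_Rle; intros. apply sum_n_Rle; intros. apply sum_n_Rle; auto. Qed.

Lemma sum_cube_Rmult_l (F : nat -> nat -> nat -> R) a n :
  sum_cube (fun i j k => a * F i j k) n = a * sum_cube F n.
Proof.
  unfold sum_cube. rewrite <- sum_n_Rmult_l. apply sum_n_ext; intros i.
  rewrite <- sum_n_Rmult_l. apply sum_n_ext; intros j. apply sum_n_Rmult_l.
Qed.

Lemma sum_cube_half_le N : sum_cube (fun i j k => (/ 2) ^ i * (/ 2) ^ j * (/ 2) ^ k) N <= 8.
Proof.
  pose proof (sum_n_geom_le (/ 2) N ltac:(lra)) as Hg. replace (/ (1 - / 2)) with 2 in Hg by field.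
  pose proof (sum_n_nonneg (fun i => (/ 2) ^ i) N ltac:(intros; apply pow_le; lra)) as Hg0.
  unfold sum_cube.
  rewrite (sum_n_ext _ (fun i => (/ 2) ^ i * (sum_n (fun j => (/ 2) ^ j) N * sum_n (fun k => (/ 2) ^ k) N))).
  - rewrite sum_n_Rmult_r. change (sum_n (pow (/ 2)) N) with (sum_n (fun i => (/ 2) ^ i) N).
    apply Rle_trans with (2 * (2 * 2)); [|lra].
    apply Rmult_le_compat; try apply Rmult_le_compat; try apply Rmult_le_pos; lra.
  - intros i. rewrite <- (sum_square_prod (fun j => (/ 2) ^ j) (fun k => (/ 2) ^ k)).
    unfold sum_square. rewrite <- sum_n_Rmult_l. apply sum_n_ext; intros j.
    rewrite <- sum_n_Rmult_l. apply sum_n_ext; intros k. apply Rmult_assoc.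
Qed.

Lemma Cmod_sum_cube (F : nat -> nat -> nat -> C) n :
  Cmod (sum_cube F n) <= sum_cube (fun i j k => Cmod (F i j k)) n.
Proof.
  eapply Rle_trans; [apply Cmod_sum_n|]. apply sum_n_Rle; intros.
  eapply Rle_trans; [apply Cmod_sum_n|]. apply sum_n_Rle; intros. apply Cmod_sum_n.
Qed.

Lemma sum_cube_sum_square {G : AbelianMonoid} (F : nat -> nat -> nat -> nat -> nat -> G) n m :
  sum_cube (fun n0 n1 n2 => sum_square (F n0 n1 n2) m) n =
  sum_square (fun i j => sum_cube (fun n0 n1 n2 => F n0 n1 n2 i j) n) m.
Proof.
  unfold sum_cube at 1.
  erewrite sum_n_ext; [|intros n0; erewrite sum_n_ext;
    [|intros n1; apply sum_n_sum_square]; apply sum_n_sum_square].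
  apply sum_n_sum_square.
Qed.

Lemma pow_le_one x n : 0 <= x <= 1 -> x ^ n <= 1.
Proof. intros Hx. rewrite <- (pow1 n). apply pow_incr. lra. Qed.

Lemma pow_le_pow_le_one x m n : 0 <= x <= 1 -> (m <= n)%nat -> x ^ n <= x ^ m.
Proof.
  intros Hx Hmn. replace n with (m + (n - m))%nat by lia. rewrite pow_add.
  pose proof (pow_le x m ltac:(lra)). pose proof (pow_le_one x (n - m) Hx). nra.
Qed.

Lemma pow_gap_le u h c k n e K : 0 <= u <= h -> h <= 1 -> 0 <= c ->
  (k < n)%nat -> (k + e < K)%nat -> u <= c * h ^ K -> u ^ n <= u ^ k * (c * h ^ (e + n)).
Proof.
  intros Hu Hh Hc Hkn HK Huc.
  assert (Eu : u ^ n = u ^ k * u * u ^ (n - k - 1))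
    by (replace n with (k + 1 + (n - k - 1))%nat at 1 by lia; now rewrite !pow_add, pow_1).
  assert (HhK : h ^ K * h ^ (n - k - 1) <= h ^ (e + n))
    by (rewrite <- pow_add; apply pow_le_pow_le_one; [lra|lia]).
  assert (Ht : u ^ (n - k - 1) <= h ^ (n - k - 1)) by (apply pow_incr; lra).
  pose proof (pow_le u k ltac:(lra)). pose proof (pow_le u (n - k - 1) ltac:(lra)).
  rewrite Eu, Rmult_assoc. apply Rmult_le_compat_l; [lra|].
  apply Rle_trans with (c * h ^ K * h ^ (n - k - 1)).
  - apply Rmult_le_compat; lra.
  - rewrite Rmult_assoc. apply Rmult_le_compat_l; lra.
Qed.

Lemma exp_le_exp x y : x <= y -> exp x <= exp y.
Proof. intros [H|H]; [left; now apply exp_increasing | now subst]. Qed.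

Lemma exp_mult_INR c n : exp (c * INR n) = exp c ^ n.
Proof.
  induction n as [|n IH].
  - simpl. rewrite Rmult_0_r. apply exp_0.
  - rewrite S_INR, Rmult_plus_distr_l, Rmult_1_r, exp_plus, IH. simpl. ring.
Qed.

Lemma geom_eventually_lt K r (eps : posreal) :
  0 <= r < 1 -> exists N0, forall N, (N0 <= N)%nat -> K * r ^ N < eps.
Proof.
  intros Hr. destruct (pow_lt_1_zero r ltac:(rewrite Rabs_right; lra) (eps / (Rabs K + 1)))
    as [N0 HN0]; [apply Rdiv_lt_0_compat; [apply cond_pos | pose proof (Rabs_pos K); lra]|].
  exists N0. intros N HN. specialize (HN0 N HN). rewrite Rabs_right in HN0 by (apply Rle_ge, pow_le; lra).
  pose proof (Rabs_pos K). pose proof (RRle_abs K). pose proof (pow_le r N ltac:(lra)).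
  apply Rle_lt_trans with ((Rabs K + 1) * r ^ N); [nra|].
  apply (Rmult_lt_compat_l (Rabs K + 1)) in HN0; [|lra].
  replace ((Rabs K + 1) * (eps / (Rabs K + 1))) with (pos eps) in HN0 by (field; lra). exact HN0.
Qed.

Lemma limC_iff (u : nat -> C) L : filterlim u eventually (locally L) <->
  forall eps : posreal, eventually (fun n => Cmod (Cminus (u n) L) < eps).
Proof. apply (@filterlim_locally_ball_norm C_AbsRing nat C_NormedModule), eventually_filter. Qed.

Lemma cauchy_geom (u : nat -> C) K r : 0 <= r < 1 ->
  (forall N N', (N <= N')%nat -> Cmod (Cminus (u N') (u N)) <= K * r ^ N) ->
  exists L, filterlim u eventually (locally L).
Proof.
  intros Hr Hu.
  apply (proj1 (@filterlim_locally_cauchy nat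
    (CompleteNormedModule.CompleteSpace _ C_CompleteNormedModule) eventually eventually_filter u)).
  intros eps. destruct (geom_eventually_lt K r eps Hr) as [N0 HN0].
  exists (fun n => (N0 <= n)%nat). split; [now exists N0|].
  intros m n Hm Hn. apply (@norm_compat1 C_AbsRing C_NormedModule).
  change (Cmod (Cminus (u n) (u m)) < eps).
  destruct (Nat.le_ge_cases m n) as [Hmn|Hmn].
  - eapply Rle_lt_trans; [apply Hu|apply HN0]; auto.
  - replace (Cminus (u n) (u m)) with (Copp (Cminus (u m) (u n))) by ring.
    rewrite Cmod_opp. eapply Rle_lt_trans; [apply Hu|apply HN0]; auto.
Qed.

Lemma lim_geom_close (u v : nat -> C) (h : nat -> nat) K r L : 0 <= r < 1 ->
  filterlim u eventually (locally L) -> (forall N, (N <= h N)%nat) ->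
  (forall N, Cmod (Cminus (v N) (u (h N))) <= K * r ^ N) ->
  filterlim v eventually (locally L).
Proof.
  intros Hr Hu Hh Hvu. apply limC_iff. intros eps.
  destruct (proj1 (limC_iff u L) Hu (pos_div_2 eps)) as [N1 HN1].
  destruct (geom_eventually_lt K r (pos_div_2 eps) Hr) as [N2 HN2].
  exists (Nat.max N1 N2). intros N HN.
  replace (Cminus (v N) L) with (Cplus (Cminus (v N) (u (h N))) (Cminus (u (h N)) L)) by ring.
  eapply Rle_lt_trans; [apply Cmod_triangle|].
  pose proof (Hvu N). specialize (HN2 N ltac:(lia)). specialize (HN1 (h N) ltac:(specialize (Hh N); lia)).
  simpl in *. lra.
Qed.

Lemma filterlim_Cminus (u v : nat -> C) a b :
  filterlim u eventually (locally a) -> filterlim v eventually (locally b) ->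
  filterlim (fun N => Cminus (u N) (v N)) eventually (locally (Cminus a b)).
Proof.
  intros Hu Hv.
  apply (filterlim_comp_2 (F := eventually) (G := locally a) (H := locally (opp b))
    u (fun N => opp (v N)) plus); [exact Hu| |].
  - eapply filterlim_comp; [exact Hv | apply (filterlim_opp (V := C_NormedModule))].
  - exact (filterlim_plus (V := C_NormedModule) a (opp b)).
Qed.

Lemma Cmod_le_of_lim0 (s : nat -> C) a B N0 :
  filterlim s eventually (locally (RtoC 0)) ->
  (forall N, (N0 <= N)%nat -> Cmod (Cminus (s N) a) <= B) -> Cmod a <= B.
Proof.
  intros Hs Hb. apply Rle_plus_epsilon. intros eps Heps.
  destruct (proj1 (limC_iff s _) Hs (mkposreal eps Heps)) as [N1 HN1].
  specialize (HN1 (Nat.max N0 N1) ltac:(lia)). specialize (Hb (Nat.max N0 N1) ltac:(lia)).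
  simpl in HN1. replace a with (Cminus (Cminus (s (Nat.max N0 N1)) (RtoC 0))
    (Cminus (s (Nat.max N0 N1)) a)) by ring.
  eapply Rle_trans; [apply Cmod_triangle|]. rewrite Cmod_opp. lra.
Qed.

Lemma Cmod_RtoC_nonneg (x : R) : 0 <= x -> Cmod (RtoC x) = x.
Proof. intros Hx. rewrite Cmod_R. now apply Rabs_right, Rle_ge. Qed.

Lemma cexp_ext z w : Re z = Re w -> Im z = Im w -> cexp z = cexp w.
Proof. intros H1 H2. unfold cexp. now rewrite H1, H2. Qed.

Lemma cexp_add z w : cexp (Cplus z w) = Cmult (cexp z) (cexp w).
Proof.
  destruct z as [x y], w as [u v]. unfold cexp, Cplus, Cmult; simpl.
  rewrite exp_plus, cos_plus, sin_plus. f_equal; ring.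
Qed.

Lemma cexp_0 : cexp (RtoC 0) = RtoC 1.
Proof. unfold cexp. simpl. rewrite exp_0, cos_0, sin_0. unfold RtoC. f_equal; ring. Qed.

Lemma cexp_pow z n : cexp (Cmult (RtoC (INR n)) z) = pow_n (cexp z) n.
Proof.
  induction n as [|n IH]; simpl pow_n.
  - change (@one C_Ring) with (RtoC 1). rewrite <- cexp_0. apply cexp_ext; simpl; ring.
  - rewrite <- IH. change (mult ?a ?b) with (Cmult a b). rewrite <- cexp_add.
    apply cexp_ext; rewrite S_INR; simpl; ring.
Qed.

Lemma Cmod_cexp z : Cmod (cexp z) = exp (Re z).
Proof.
  unfold Cmod, cexp; cbn [fst snd].
  replace ((exp (Re z) * cos (Im z)) ^ 2 + (exp (Re z) * sin (Im z)) ^ 2) with (exp (Re z) ^ 2)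
    by (rewrite <- (Rmult_1_r (exp (Re z) ^ 2)), <- (sin2_cos2 (Im z)); unfold Rsqr; ring).
  apply sqrt_pow2, Rlt_le, exp_pos.
Qed.

Lemma cexp_real z : Im z = 0 -> cexp z = RtoC (exp (Re z)).
Proof. intros H. unfold cexp. rewrite H, cos_0, sin_0. unfold RtoC. f_equal; ring. Qed.

(** * Power series in three variables *)

Lemma Cmod_pterm (d : nat -> nat -> nat -> C) w0 w1 w2 n0 n1 n2 :
  Cmod (pterm d w0 w1 w2 n0 n1 n2) = Cmod (d n0 n1 n2) * Cmod w0 ^ n0 * Cmod w1 ^ n1 * Cmod w2 ^ n2.
Proof. unfold pterm. rewrite !Cmod_mult. repeat f_equal; apply Cmod_pow. Qed.

Lemma Cmod_pterm_le (c : nat -> nat -> nat -> C) w0 w1 w2 M n0 n1 n2 :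
  (forall N, box_abs_sum c w0 w1 w2 N <= M) -> Cmod (pterm c w0 w1 w2 n0 n1 n2) <= M.
Proof.
  intros HM. set (N := (n0 + n1 + n2)%nat). eapply Rle_trans; [|apply (HM N)].
  assert (Hnn : forall i j k, 0 <= Cmod (pterm c w0 w1 w2 i j k)) by (intros; apply Cmod_ge_0).
  eapply Rle_trans; [|apply (sum_n_term_le _ N n0); [lia|intros;
    apply sum_n_nonneg; intros; apply sum_n_nonneg; auto]].
  eapply Rle_trans; [|apply (sum_n_term_le _ N n1); [lia|intros; apply sum_n_nonneg; auto]].
  apply (sum_n_term_le (fun k => Cmod (pterm c w0 w1 w2 n0 n1 k)) N n2); [lia|auto].
Qed.

Lemma pseries_sum_coef_le c w M n0 n1 n2 : 0 <= w ->
  (forall N, box_abs_sum c (RtoC w) (RtoC w) (RtoC w) N <= M) ->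
  Cmod (c n0 n1 n2) * (w ^ n0 * w ^ n1 * w ^ n2) <= M.
Proof.
  intros Hw HM. pose proof (Cmod_pterm_le c _ _ _ M n0 n1 n2 HM) as H.
  rewrite Cmod_pterm, !Cmod_RtoC_nonneg in H by exact Hw. rewrite !Rmult_assoc in *. exact H.
Qed.

Lemma pterm_Cminus (c c' : nat -> nat -> nat -> C) w0 w1 w2 n0 n1 n2 :
  pterm (fun n0 n1 n2 => Cminus (c n0 n1 n2) (c' n0 n1 n2)) w0 w1 w2 n0 n1 n2 =
  Cminus (pterm c w0 w1 w2 n0 n1 n2) (pterm c' w0 w1 w2 n0 n1 n2).
Proof. unfold pterm. ring. Qed.

Lemma box_sum_Cminus (c c' : nat -> nat -> nat -> C) w0 w1 w2 N :
  box_sum (fun n0 n1 n2 => Cminus (c n0 n1 n2) (c' n0 n1 n2)) w0 w1 w2 N =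
  Cminus (box_sum c w0 w1 w2 N) (box_sum c' w0 w1 w2 N).
Proof.
  unfold box_sum. rewrite <- sum_n_Cminus. apply sum_n_ext; intros i.
  rewrite <- sum_n_Cminus. apply sum_n_ext; intros j.
  rewrite <- sum_n_Cminus. apply sum_n_ext; intros k.
  apply pterm_Cminus.
Qed.

Section MonomialGrouping.

Variables (e0 e1 e2 : nat -> nat -> nat) (a : nat -> nat -> C).
Hypothesis e_range : forall i j, (i <= 2 * e0 i j)%nat /\ (j <= 2 * e2 i j)%nat.

Definition at_exponent (i j n0 n1 n2 : nat) : bool :=
  Nat.eqb (e0 i j) n0 && Nat.eqb (e1 i j) n1 && Nat.eqb (e2 i j) n2.

(* By [e_range], the pairs with exponents [(n0, n1, n2)] lie in the square of side [2 (n0 + n2)]. *)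
Definition grouped_coef (n0 n1 n2 : nat) : C :=
  sum_square (fun i j => if at_exponent i j n0 n1 n2 then a i j else zero) (2 * (n0 + n2)).

Definition grouped_term (w0 w1 w2 : C) (i j : nat) : C :=
  Cmult (Cmult (Cmult (a i j) (pow_n w0 (e0 i j))) (pow_n w1 (e1 i j))) (pow_n w2 (e2 i j)).

Lemma grouped_coef_support n0 n1 n2 :
  grouped_coef n0 n1 n2 <> zero -> exists i j, at_exponent i j n0 n1 n2 = true.
Proof.
  intros Hc. apply NNPP. intros Hno. apply Hc.
  apply sum_n_zero; intros i _. apply sum_n_zero; intros j _.
  destruct (at_exponent i j n0 n1 n2) eqn:E; [|reflexivity].
  exfalso. eauto.
Qed.

Lemma pterm_grouped w0 w1 w2 n0 n1 n2 m : (2 * (n0 + n2) <= m)%nat ->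
  pterm grouped_coef w0 w1 w2 n0 n1 n2 =
  sum_square (fun i j => if at_exponent i j n0 n1 n2 then grouped_term w0 w1 w2 i j else zero) m.
Proof.
  intros Hm. unfold pterm, grouped_coef.
  rewrite <- (sum_square_extend _ _ m Hm).
  2:{ intros i j Hij. destruct (at_exponent i j n0 n1 n2) eqn:E; [|reflexivity].
      unfold at_exponent in E. rewrite !Bool.andb_true_iff, !Nat.eqb_eq in E.
      pose proof (e_range i j). lia. }
  rewrite <- !(sum_square_mult_r (K := C_Ring)). apply sum_square_ext; intros i j _ _.
  unfold grouped_term, at_exponent.
  destruct (Nat.eqb_spec (e0 i j) n0), (Nat.eqb_spec (e1 i j) n1), (Nat.eqb_spec (e2 i j) n2);
    subst; cbn [andb]; try reflexivity; now rewrite !(mult_zero_l (K := C_Ring)).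
Qed.

Lemma box_sum_grouped w0 w1 w2 N :
  box_sum grouped_coef w0 w1 w2 N =
  sum_square (fun i j => if Nat.leb (e0 i j) N && Nat.leb (e1 i j) N && Nat.leb (e2 i j) N
                         then grouped_term w0 w1 w2 i j else zero) (4 * N).
Proof.
  transitivity (sum_cube (fun n0 n1 n2 => sum_square (fun i j =>
    if at_exponent i j n0 n1 n2 then grouped_term w0 w1 w2 i j else zero) (4 * N)) N).
  { apply sum_n_ext_loc; intros n0 H0. apply sum_n_ext_loc; intros n1 H1.
    apply sum_n_ext_loc; intros n2 H2. apply pterm_grouped. lia. }
  rewrite sum_cube_sum_square. apply sum_square_ext; intros i j _ _. apply sum_cube_delta.
Qed.

Lemma box_abs_sum_grouped_le w0 w1 w2 N :
  box_abs_sum grouped_coef w0 w1 w2 N <=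
  sum_square (fun i j => Cmod (grouped_term w0 w1 w2 i j)) (4 * N).
Proof.
  change (box_abs_sum grouped_coef w0 w1 w2 N)
    with (sum_cube (fun n0 n1 n2 => Cmod (pterm grouped_coef w0 w1 w2 n0 n1 n2)) N).
  apply Rle_trans with (sum_cube (fun n0 n1 n2 => sum_square (fun i j =>
    if at_exponent i j n0 n1 n2 then Cmod (grouped_term w0 w1 w2 i j) else zero) (4 * N)) N).
  { apply sum_n_Rle; intros n0 H0. apply sum_n_Rle; intros n1 H1. apply sum_n_Rle; intros n2 H2.
    rewrite (pterm_grouped w0 w1 w2 n0 n1 n2 (4 * N)) by lia.
    eapply Rle_trans; [apply Cmod_sum_square|]. right. apply sum_square_ext; intros.
    apply Cmod_if. }
  rewrite sum_cube_sum_square. apply sum_square_Rle; intros i j _ _.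
  unfold at_exponent. rewrite sum_cube_delta.
  destruct (_ && _); [lra|]. apply Cmod_ge_0.
Qed.

End MonomialGrouping.

(** * An identity theorem for power series in three variables *)

Definition lex_lt (n0 n1 n2 k0 k1 k2 : nat) : Prop :=
  (n0 < k0 \/ (n0 = k0 /\ n1 < k1) \/ (n0 = k0 /\ n1 = k1 /\ n2 < k2))%nat.

Lemma lex_ind (P : nat -> nat -> nat -> Prop) :
  (forall k0 k1 k2, (forall n0 n1 n2, lex_lt n0 n1 n2 k0 k1 k2 -> P n0 n1 n2) -> P k0 k1 k2) ->
  forall k0 k1 k2, P k0 k1 k2.
Proof.
  intros H k0. induction k0 as [k0 IH0] using lt_wf_ind.
  intros k1. induction k1 as [k1 IH1] using lt_wf_ind.
  intros k2. induction k2 as [k2 IH2] using lt_wf_ind.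
  apply H. intros n0 n1 n2 [Hl|[[-> Hl]|[-> [-> Hl]]]]; auto.
Qed.

Section LexProbe.

Variables (k0 k1 k2 : nat) (dl : R).
Hypothesis Hdl : 0 < dl <= 1.

Let h : R := / 2.
Let K : nat := (k0 + k1 + k2 + 1)%nat.

(* Each probe coordinate is tiny compared with the powers of the later ones, which makes
   the monomial of exponent [k] dominate all lexicographically larger monomials. *)
Definition probe2 : R := dl * h ^ K.
Definition probe1 : R := dl * probe2 ^ k2 * h ^ K.
Definition probe0 : R := dl * probe1 ^ k1 * probe2 ^ k2 * h ^ K.

Lemma probe_range : 0 < probe0 <= h /\ 0 < probe1 <= h /\ 0 < probe2 <= h.
Proof.
  assert (HhK : 0 < h ^ K <= h).
  { split; [apply pow_lt; unfold h; lra|].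
    rewrite <- (pow_1 h) at 2. apply pow_le_pow_le_one; unfold h, K; [lra|lia]. }
  assert (Hsmall : forall x, 0 < x <= 1 -> 0 < x * h ^ K <= h) by (intros; split; nra).
  assert (Hpow : forall x n, 0 < x <= h -> 0 < x ^ n <= 1)
    by (intros; split; [apply pow_lt|apply pow_le_one]; unfold h in *; lra).
  assert (Hmul : forall x y, 0 < x <= 1 -> 0 < y <= 1 -> 0 < x * y <= 1).
  { intros x y Hx Hy. split; [apply Rmult_lt_0_compat; lra|].
    rewrite <- (Rmult_1_l 1). apply Rmult_le_compat; lra. }
  assert (Hp2 : 0 < probe2 <= h) by (apply Hsmall; lra).
  assert (Hp1 : 0 < probe1 <= h) by (apply Hsmall, Hmul, Hpow; auto).
  assert (Hp0 : 0 < probe0 <= h) by (apply Hsmall, Hmul, Hpow; auto; apply Hmul, Hpow; auto).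
  auto.
Qed.

Lemma probe_lex_dominance n0 n1 n2 : lex_lt k0 k1 k2 n0 n1 n2 ->
  probe0 ^ n0 * probe1 ^ n1 * probe2 ^ n2 <=
  dl * (probe0 ^ k0 * probe1 ^ k1 * probe2 ^ k2) * (h ^ n0 * h ^ n1 * h ^ n2).
Proof.
  destruct probe_range as [H0 [H1 H2]].
  assert (Hh : 0 <= h <= 1) by (unfold h; lra).
  assert (Hp : forall x n, 0 <= x -> 0 <= x ^ n) by (intros; now apply pow_le).
  pose proof (Hp probe0 k0 ltac:(lra)). pose proof (Hp probe1 k1 ltac:(lra)).
  pose proof (Hp probe2 k2 ltac:(lra)). pose proof (Hp h n0 ltac:(lra)).
  pose proof (Hp h n1 ltac:(lra)). pose proof (Hp h n2 ltac:(lra)).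
  assert (Hle : forall x n, 0 <= x <= h -> x ^ n <= h ^ n) by (intros; now apply pow_incr).
  intros [Hlt|[[<- Hlt]|[<- [<- Hlt]]]].
  - pose proof (pow_gap_le probe0 h (dl * probe1 ^ k1 * probe2 ^ k2) k0 n0 0 K
      ltac:(lra) ltac:(lra) ltac:(repeat apply Rmult_le_pos; lra) Hlt ltac:(unfold K; lia) ltac:(unfold probe0; lra)).
    pose proof (Hle probe1 n1 ltac:(lra)). pose proof (Hle probe2 n2 ltac:(lra)).
    pose proof (Hp probe0 n0 ltac:(lra)). pose proof (Hp probe1 n1 ltac:(lra)).
    pose proof (Hp probe2 n2 ltac:(lra)). simpl Nat.add in *.
    apply Rle_trans with (probe0 ^ k0 * (dl * probe1 ^ k1 * probe2 ^ k2 * h ^ n0) * h ^ n1 * h ^ n2);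
      [|right; ring].
    apply Rmult_le_compat; [repeat apply Rmult_le_pos; lra|lra|apply Rmult_le_compat; try (repeat apply Rmult_le_pos); lra|lra].
  - pose proof (pow_gap_le probe1 h (dl * probe2 ^ k2) k1 n1 k0 K
      ltac:(lra) ltac:(lra) ltac:(repeat apply Rmult_le_pos; lra) Hlt ltac:(unfold K; lia) ltac:(unfold probe1; lra)).
    pose proof (Hle probe2 n2 ltac:(lra)). pose proof (Hp probe1 n1 ltac:(lra)).
    pose proof (Hp probe2 n2 ltac:(lra)). rewrite pow_add in *.
    apply Rle_trans with (probe0 ^ k0 * (probe1 ^ k1 * (dl * probe2 ^ k2 * (h ^ k0 * h ^ n1))) * h ^ n2);
      [|right; ring].
    apply Rmult_le_compat; [repeat apply Rmult_le_pos; lra|lra|apply Rmult_le_compat_l; lra|lra].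
  - pose proof (pow_gap_le probe2 h dl k2 n2 (k0 + k1) K
      ltac:(lra) ltac:(lra) ltac:(lra) Hlt ltac:(unfold K; lia) ltac:(unfold probe2; lra)).
    rewrite !pow_add in *.
    apply Rle_trans with (probe0 ^ k0 * probe1 ^ k1 * (probe2 ^ k2 * (dl * (h ^ k0 * h ^ k1 * h ^ n2))));
      [|right; ring].
    apply Rmult_le_compat_l; [repeat apply Rmult_le_pos; lra|lra].
Qed.

End LexProbe.

Section IdentityTheorem.

Variables (d : nat -> nat -> nat -> C) (M : R).
Hypothesis d_bounded :
  forall n0 n1 n2, Cmod (d n0 n1 n2) * ((/ 2) ^ n0 * (/ 2) ^ n1 * (/ 2) ^ n2) <= M.
Hypothesis d_sum_vanishes : forall u0 u1 u2, 0 < u0 < 1 -> 0 < u1 < 1 -> 0 < u2 < 1 ->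
  filterlim (box_sum d (RtoC u0) (RtoC u1) (RtoC u2)) eventually (locally (RtoC 0)).

Lemma bound_nonneg : 0 <= M.
Proof.
  eapply Rle_trans; [|apply (d_bounded 0%nat 0%nat 0%nat)].
  apply Rmult_le_pos; [apply Cmod_ge_0|simpl; lra].
Qed.

Section LeadingTerm.

Variables (k0 k1 k2 : nat) (dl : R).
Hypothesis Hdl : 0 < dl <= 1.
Hypothesis d_lower : forall n0 n1 n2, lex_lt n0 n1 n2 k0 k1 k2 -> d n0 n1 n2 = RtoC 0.

Let u0 := probe0 k0 k1 k2 dl.
Let u1 := probe1 k0 k1 k2 dl.
Let u2 := probe2 k0 k1 k2 dl.
Let P : R := u0 ^ k0 * u1 ^ k1 * u2 ^ k2.
Let f := pterm d (RtoC (u0 / 2)) (RtoC (u1 / 2)) (RtoC (u2 / 2)).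

Lemma Cmod_probe_term n0 n1 n2 :
  Cmod (f n0 n1 n2) = Cmod (d n0 n1 n2) * ((/ 2) ^ n0 * (/ 2) ^ n1 * (/ 2) ^ n2)
                      * (u0 ^ n0 * u1 ^ n1 * u2 ^ n2).
Proof.
  destruct (probe_range k0 k1 k2 dl Hdl) as [H0 [H1 H2]].
  unfold f. rewrite Cmod_pterm, !Cmod_RtoC_nonneg by (unfold u0, u1, u2; lra).
  unfold Rdiv. rewrite !Rpow_mult_distr. ring.
Qed.

Lemma Cmod_probe_term_le n0 n1 n2 :
  Cmod (if Nat.eqb k0 n0 && Nat.eqb k1 n1 && Nat.eqb k2 n2 then zero else f n0 n1 n2)
    <= M * dl * P * ((/ 2) ^ n0 * (/ 2) ^ n1 * (/ 2) ^ n2).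
Proof.
  destruct (probe_range k0 k1 k2 dl Hdl) as [H0 [H1 H2]].
  pose proof bound_nonneg.
  assert (HB : 0 <= M * dl * P * ((/ 2) ^ n0 * (/ 2) ^ n1 * (/ 2) ^ n2))
    by (unfold P, u0, u1, u2; repeat apply Rmult_le_pos; try apply pow_le; lra).
  assert (Htri : (n0 = k0 /\ n1 = k1 /\ n2 = k2) \/ lex_lt n0 n1 n2 k0 k1 k2 \/
                 lex_lt k0 k1 k2 n0 n1 n2) by (unfold lex_lt; lia).
  destruct Htri as [[-> [-> ->]]|[Hlex|Hlex]].
  - rewrite !Nat.eqb_refl. simpl. now rewrite Cmod_zero.
  - eapply Rle_trans; [apply Cmod_if_zero_le|].
    unfold f, pterm. now rewrite (d_lower n0 n1 n2 Hlex), !Cmult_0_l, Cmod_0.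
  - eapply Rle_trans; [apply Cmod_if_zero_le|]. rewrite Cmod_probe_term.
    pose proof (probe_lex_dominance k0 k1 k2 dl Hdl n0 n1 n2 Hlex) as Hdom.
    replace (M * dl * P * ((/ 2) ^ n0 * (/ 2) ^ n1 * (/ 2) ^ n2))
      with (M * (dl * P * ((/ 2) ^ n0 * (/ 2) ^ n1 * (/ 2) ^ n2))) by ring.
    apply Rmult_le_compat; [apply Rmult_le_pos; [apply Cmod_ge_0|]|..|apply d_bounded|exact Hdom];
      unfold u0, u1, u2; repeat apply Rmult_le_pos; apply pow_le; lra.
Qed.

(* At the probe point the whole sum, which tends to 0, is within [8 M dl P] of the leading term. *)
Lemma leading_coef_le : Cmod (d k0 k1 k2) * ((/ 2) ^ k0 * (/ 2) ^ k1 * (/ 2) ^ k2) <= 8 * M * dl.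
Proof.
  destruct (probe_range k0 k1 k2 dl Hdl) as [H0 [H1 H2]].
  assert (HP : 0 < P) by (unfold P, u0, u1, u2; repeat apply Rmult_lt_0_compat; apply pow_lt; lra).
  assert (Hk : Cmod (f k0 k1 k2) <= 8 * M * dl * P).
  { apply (Cmod_le_of_lim0 (box_sum d (RtoC (u0 / 2)) (RtoC (u1 / 2)) (RtoC (u2 / 2)))
      _ _ (k0 + k1 + k2)); [apply d_sum_vanishes; unfold u0, u1, u2; lra|].
    intros N HN. change (box_sum d _ _ _ N) with (sum_cube f N).
    rewrite (sum_cube_isolate f k0 k1 k2 N) by lia.
    assert (Hcancel : forall A B : C, Cminus (Cplus A B) A = B) by (intros; ring).
    change plus with Cplus. rewrite Hcancel.
    eapply Rle_trans; [apply Cmod_sum_cube|].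
    eapply Rle_trans; [apply sum_cube_Rle; intros; apply Cmod_probe_term_le|].
    rewrite sum_cube_Rmult_l. pose proof (sum_cube_half_le N). pose proof bound_nonneg.
    assert (0 <= M * dl * P) by (apply Rmult_le_pos; [apply Rmult_le_pos|]; lra). nra. }
  rewrite Cmod_probe_term in Hk. apply (Rmult_le_reg_r P); [exact HP|]. exact Hk.
Qed.

End LeadingTerm.

Lemma pseries_coef_eq0 : forall n0 n1 n2, d n0 n1 n2 = RtoC 0.
Proof.
  apply lex_ind. intros k0 k1 k2 Hlow.
  set (W := (/ 2) ^ k0 * (/ 2) ^ k1 * (/ 2) ^ k2).
  assert (HW : 0 < W) by (unfold W; repeat apply Rmult_lt_0_compat; apply pow_lt; lra).
  pose proof bound_nonneg as HM0.
  assert (Hd : Cmod (d k0 k1 k2) * W <= 0).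
  { apply Rle_plus_epsilon. intros eps Heps.
    set (dl := Rmin 1 (eps / (8 * M + 1))).
    assert (Hdl : 0 < dl <= 1)
      by (split; [apply Rmin_pos; [lra|apply Rdiv_lt_0_compat; lra]|apply Rmin_l]).
    assert (8 * M * dl <= eps).
    { apply Rle_trans with (8 * M * (eps / (8 * M + 1))).
      - apply Rmult_le_compat_l; [lra|apply Rmin_r].
      - apply (Rmult_le_reg_r (8 * M + 1)); [lra|]. field_simplify; nra. }
    pose proof (leading_coef_le k0 k1 k2 dl Hdl Hlow) as Hlead. fold W in Hlead. lra. }
  apply Cmod_eq_0. pose proof (Cmod_ge_0 (d k0 k1 k2)). nra.
Qed.

End IdentityTheorem.

(** * The theta series in the coordinates q *)

(* [zigzag] enumerates Z as 0, -1, 1, -2, 2, ..., so its first [2 N + 1] values fill [-N, N]. *)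
Definition zigzag (i : nat) : Z :=
  if Nat.even i then Z.of_nat (Nat.div2 i) else (- Z.of_nat (Nat.div2 i) - 1)%Z.

Lemma zigzag_double k : zigzag (2 * k) = Z.of_nat k.
Proof. unfold zigzag. now rewrite Nat.div2_double, Nat.even_mul. Qed.

Lemma zigzag_succ_double k : zigzag (S (2 * k)) = (- Z.of_nat k - 1)%Z.
Proof. unfold zigzag. now rewrite Nat.div2_succ_double, Nat.even_succ, Nat.odd_mul. Qed.

Lemma zigzag_abs_ge i : (Z.of_nat i <= 2 * Z.abs (zigzag i))%Z.
Proof.
  destruct (Nat.Even_or_Odd i) as [[k ->]|[k ->]].
  - rewrite zigzag_double. lia.
  - rewrite Nat.add_1_r, zigzag_succ_double. lia.
Qed.

Lemma sum_n_centered {G : AbelianMonoid} (f : Z -> G) N :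
  sum_n (fun i => f (Z.of_nat i - Z.of_nat N)%Z) (2 * N) = sum_n (fun i => f (zigzag i)) (2 * N).
Proof.
  induction N as [|N IH].
  - now rewrite !sum_O.
  - replace (2 * S N)%nat with (S (S (2 * N))) by lia.
    rewrite sum_n_succ_l, sum_Sn.
    rewrite (sum_n_ext (fun i => f (Z.of_nat (S i) - Z.of_nat (S N))%Z)
      (fun i => f (Z.of_nat i - Z.of_nat N)%Z)) by (intros; f_equal; lia).
    rewrite IH, !sum_Sn, zigzag_succ_double.
    replace (S (S (2 * N))) with (2 * S N)%nat by lia. rewrite zigzag_double.
    replace (Z.of_nat 0 - Z.of_nat (S N))%Z with (- Z.of_nat N - 1)%Z by lia.
    replace (Z.of_nat (2 * S N) - Z.of_nat (S N))%Z with (Z.of_nat (S N)) by lia.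
    rewrite plus_assoc. f_equal. apply plus_comm.
Qed.

Definition twice_shift (a : nat) (g : Z) : Z := (2 * g + Z.of_nat a)%Z.

Definition sqZ (u : Z) : nat := Z.to_nat (u * u).

Lemma INR_sqZ u : INR (sqZ u) = IZR u * IZR u.
Proof. unfold sqZ. rewrite INR_IZR_INZ, Z2Nat.id by nia. apply mult_IZR. Qed.

Lemma IZR_twice_shift a g : IZR (twice_shift a g) = 2 * (IZR g + INR a / 2).
Proof. unfold twice_shift. rewrite plus_IZR, mult_IZR, INR_IZR_INZ. field. Qed.

Lemma sqZ_eq_iff u k : sqZ u = k <-> (u * u = Z.of_nat k)%Z.
Proof.
  unfold sqZ. split; intros H.
  - subst k. rewrite Z2Nat.id; [reflexivity|apply Z.square_nonneg].
  - rewrite H. apply Nat2Z.id.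
Qed.

Lemma sqZ_sub_le u v : (sqZ (u - v) <= 2 * (sqZ u + sqZ v))%nat.
Proof.
  unfold sqZ. apply Nat2Z.inj_le.
  rewrite Nat2Z.inj_mul, Nat2Z.inj_add, !Z2Nat.id by apply Z.square_nonneg. simpl (Z.of_nat 2).
  pose proof (Z.square_nonneg (u + v)).
  assert (2 * (u * u + v * v) - (u - v) * (u - v) = (u + v) * (u + v))%Z by ring. lia.
Qed.

Definition theta_phase (a1 a2 b1 b2 : nat) (g1 g2 : Z) : C :=
  theta_term a1 a2 b1 b2 (RtoC 0) (RtoC 0) (RtoC 0) g1 g2.

(* [Z[x] = (z0 + z1) x1^2 + (z2 + z1) x2^2 - z1 (x1 - x2)^2] with [x = u / 2], [u = 2 g + a]. *)
Lemma theta_term_monomial a1 a2 b1 b2 z0 z1 z2 g1 g2 :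
  let u1 := twice_shift a1 g1 in let u2 := twice_shift a2 g2 in
  theta_term a1 a2 b1 b2 z0 z1 z2 g1 g2 =
  Cmult (Cmult (Cmult (theta_phase a1 a2 b1 b2 g1 g2)
    (pow_n (q0 z0 z1 z2) (sqZ u1))) (pow_n (q1 z0 z1 z2) (sqZ (u1 - u2))))
    (pow_n (q2 z0 z1 z2) (sqZ u2)).
Proof.
  intros u1 u2. unfold q0, q1, q2, theta_phase, u1, u2.
  rewrite <- !cexp_pow. unfold theta_term. rewrite <- !cexp_add.
  rewrite !INR_sqZ, minus_IZR, !IZR_twice_shift.
  apply cexp_ext; simpl; field.
Qed.

Lemma quad_form_trace_ge y0 y1 y2 x1 x2 :
  (y0 * y2 - y1 * y1) * (x1 * x1 + x2 * x2) <=
  (y0 + y2) * (y0 * (x1 * x1) + 2 * y1 * (x1 * x2) + y2 * (x2 * x2)).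
Proof.
  pose proof (Rle_0_sqr (y0 * x1 + y1 * x2)). pose proof (Rle_0_sqr (y1 * x1 + y2 * x2)).
  unfold Rsqr in *. nra.
Qed.

Definition theta_decay_rate (z0 z1 z2 : C) : R :=
  PI * (Im z0 * Im z2 - Im z1 * Im z1) / (4 * (Im z0 + Im z2)).

Lemma theta_decay_rate_pos z0 z1 z2 : in_H2 z0 z1 z2 -> 0 < theta_decay_rate z0 z1 z2.
Proof.
  intros [H0 HD]. unfold theta_decay_rate.
  assert (0 < Im z2) by nra. pose proof PI_RGT_0.
  apply Rdiv_lt_0_compat; nra.
Qed.

Lemma Cmod_theta_term_le a1 a2 b1 b2 z0 z1 z2 g1 g2 : in_H2 z0 z1 z2 ->
  Cmod (theta_term a1 a2 b1 b2 z0 z1 z2 g1 g2) <=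
  exp (- theta_decay_rate z0 z1 z2 * INR (sqZ (twice_shift a1 g1) + sqZ (twice_shift a2 g2))).
Proof.
  intros [H0 HD]. unfold theta_term. rewrite Cmod_cexp. apply exp_le_exp.
  rewrite plus_INR, !INR_sqZ, !IZR_twice_shift. unfold theta_decay_rate.
  set (x1 := IZR g1 + INR a1 / 2). set (x2 := IZR g2 + INR a2 / 2).
  assert (0 < Im z2) by nra. pose proof PI_RGT_0.
  pose proof (quad_form_trace_ge (Im z0) (Im z1) (Im z2) x1 x2).
  destruct z0 as [r0 y0], z1 as [r1 y1], z2 as [r2 y2]. simpl in *.
  set (Q := y0 * (x1 * x1) + 2 * y1 * (x1 * x2) + y2 * (x2 * x2)) in *.
  apply Rle_trans with (- PI * Q); [right; unfold Q; ring|].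
  apply (Rmult_le_reg_l (y0 + y2)); [lra|].
  replace ((y0 + y2) * (- (PI * (y0 * y2 - y1 * y1) / (4 * (y0 + y2))) *
    (2 * x1 * (2 * x1) + 2 * x2 * (2 * x2))))
    with (- PI * ((y0 * y2 - y1 * y1) * (x1 * x1 + x2 * x2))) by (field; lra).
  nra.
Qed.

Definition theta_exp0 (a1 a2 : nat) (i j : nat) : nat := sqZ (twice_shift a1 (zigzag i)).

Definition theta_exp1 (a1 a2 : nat) (i j : nat) : nat :=
  sqZ (twice_shift a1 (zigzag i) - twice_shift a2 (zigzag j)).

Definition theta_exp2 (a1 a2 : nat) (i j : nat) : nat := sqZ (twice_shift a2 (zigzag j)).

Definition theta_coef (a1 a2 b1 b2 : nat) : nat -> nat -> nat -> C :=
  grouped_coef (theta_exp0 a1 a2) (theta_exp1 a1 a2) (theta_exp2 a1 a2)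
    (fun i j => theta_phase a1 a2 b1 b2 (zigzag i) (zigzag j)).

Lemma zigzag_index_le a i : (a <= 1)%nat -> (i <= 2 * sqZ (twice_shift a (zigzag i)))%nat.
Proof.
  intros Ha. pose proof (zigzag_abs_ge i). unfold sqZ, twice_shift.
  set (g := zigzag i) in *.
  assert (Z.abs g <= Z.abs (2 * g + Z.of_nat a))%Z by lia.
  assert (Z.abs (2 * g + Z.of_nat a) <= (2 * g + Z.of_nat a) * (2 * g + Z.of_nat a))%Z by nia.
  lia.
Qed.

Section ThetaSeries.

Variables (a1 a2 b1 b2 : nat) (z0 z1 z2 : C).
Hypotheses (Ha1 : (a1 <= 1)%nat) (Ha2 : (a2 <= 1)%nat) (Hz : in_H2 z0 z1 z2).

Let T (i j : nat) : C := theta_term a1 a2 b1 b2 z0 z1 z2 (zigzag i) (zigzag j).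
Let E0 := theta_exp0 a1 a2.
Let E1 := theta_exp1 a1 a2.
Let E2 := theta_exp2 a1 a2.
Let rho : R := exp (- theta_decay_rate z0 z1 z2 / 8).

Lemma rho_range : 0 <= rho < 1.
Proof.
  pose proof (theta_decay_rate_pos _ _ _ Hz). unfold rho. split.
  - apply Rlt_le, exp_pos.
  - rewrite <- exp_0. apply exp_increasing. lra.
Qed.

Lemma theta_exp_range i j : (i <= 2 * E0 i j)%nat /\ (j <= 2 * E2 i j)%nat.
Proof. split; now apply zigzag_index_le. Qed.

(* Half of the Gaussian decay pays for the weights [rho^i rho^j]; the rest controls the tails. *)
Lemma Cmod_theta_term_zigzag_le i j :
  Cmod (T i j) <= rho ^ i * rho ^ j * rho ^ (4 * (E0 i j + E2 i j)).
Proof.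
  eapply Rle_trans; [exact (Cmod_theta_term_le a1 a2 b1 b2 z0 z1 z2 (zigzag i) (zigzag j) Hz)|].
  unfold rho. rewrite <- !exp_mult_INR, <- !exp_plus. apply exp_le_exp.
  pose proof (theta_decay_rate_pos _ _ _ Hz). fold (theta_exp0 a1 a2 i j) (theta_exp2 a1 a2 i j).
  destruct (theta_exp_range i j) as [Hi Hj]. unfold E0, E2 in *.
  apply le_INR in Hi, Hj. rewrite !mult_INR, !plus_INR in *. simpl (INR 2) in *. simpl (INR 4).
  set (k := theta_decay_rate z0 z1 z2) in *.
  pose proof (pos_INR (theta_exp0 a1 a2 i j)). pose proof (pos_INR (theta_exp2 a1 a2 i j)).
  apply Rmult_le_compat_l with (r := k) in Hi, Hj; [|lra..]. nra.
Qed.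

Lemma sum_square_rho_le n : sum_square (fun i j => rho ^ i * rho ^ j) n <= / (1 - rho) * / (1 - rho).
Proof.
  rewrite sum_square_prod. pose proof (sum_n_geom_le rho n rho_range).
  pose proof (sum_n_nonneg (fun i => rho ^ i) n ltac:(intros; apply pow_le, rho_range)).
  apply Rmult_le_compat; assumption.
Qed.

Lemma Cmod_theta_term_tail i j m : (m <= 4 * (E0 i j + E2 i j))%nat ->
  Cmod (T i j) <= rho ^ i * rho ^ j * rho ^ m.
Proof.
  intros Hm. eapply Rle_trans; [apply Cmod_theta_term_zigzag_le|].
  pose proof rho_range. apply Rmult_le_compat_l.
  - apply Rmult_le_pos; apply pow_le; lra.
  - apply pow_le_pow_le_one; [lra|exact Hm].
Qed.

Lemma theta_partial_square N : theta_partial a1 a2 b1 b2 z0 z1 z2 N = sum_square T (2 * N).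
Proof.
  unfold theta_partial, sum_square, T.
  erewrite sum_n_ext; [|intros i; apply (sum_n_centered (fun g2 =>
    theta_term a1 a2 b1 b2 z0 z1 z2 (Z.of_nat i - Z.of_nat N)%Z g2))].
  apply (sum_n_centered (fun g1 => sum_n (fun j =>
    theta_term a1 a2 b1 b2 z0 z1 z2 g1 (zigzag j)) (2 * N))).
Qed.

Let K : R := / (1 - rho) * / (1 - rho).

Lemma theta_partial_converges : exists v, theta_is a1 a2 b1 b2 z0 z1 z2 v.
Proof.
  pose proof rho_range as Hrho.
  apply (cauchy_geom _ K (rho ^ 2)); [simpl; split; nra|].
  intros N N' HN. rewrite !theta_partial_square, <- pow_mult.
  set (p := fun i j => Nat.leb i (2 * N) && Nat.leb j (2 * N)).
  rewrite (sum_square_ext T (fun i j => if p i j then T i j else zero) (2 * N)).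
  2:{ intros i j Hi Hj. unfold p. now rewrite (proj2 (Nat.leb_le _ _) Hi), (proj2 (Nat.leb_le _ _) Hj). }
  rewrite <- (sum_square_extend (fun i j => if p i j then T i j else zero) (2 * N) (2 * N')).
  2: lia.
  2:{ intros i j Hij. unfold p.
      destruct Hij as [Hij|Hij]; apply Nat.leb_gt in Hij; rewrite Hij;
        [|rewrite Bool.andb_false_r]; reflexivity. }
  apply (sum_square_tail_le _ _ (fun i j => rho ^ i * rho ^ j)); [intros; apply Rmult_le_pos; apply pow_le; lra|
    apply sum_square_rho_le|apply pow_le; lra|].
  intros i j Hp. apply Cmod_theta_term_tail.
  destruct (theta_exp_range i j). unfold p in Hp.
  apply Bool.andb_false_iff in Hp as [Hp|Hp]; apply Nat.leb_gt in Hp; lia.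
Qed.

Lemma grouped_term_theta i j :
  grouped_term E0 E1 E2 (fun i j => theta_phase a1 a2 b1 b2 (zigzag i) (zigzag j))
    (q0 z0 z1 z2) (q1 z0 z1 z2) (q2 z0 z1 z2) i j = T i j.
Proof. unfold T. now rewrite theta_term_monomial. Qed.

Lemma box_sum_theta_coef N :
  box_sum (theta_coef a1 a2 b1 b2) (q0 z0 z1 z2) (q1 z0 z1 z2) (q2 z0 z1 z2) N =
  sum_square (fun i j => if Nat.leb (E0 i j) N && Nat.leb (E1 i j) N && Nat.leb (E2 i j) N
                         then T i j else zero) (4 * N).
Proof.
  unfold theta_coef. rewrite box_sum_grouped by apply theta_exp_range.
  apply sum_square_ext; intros i j _ _. now rewrite grouped_term_theta.
Qed.

Lemma theta_expansion_at : exists v, theta_is a1 a2 b1 b2 z0 z1 z2 v /\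
  pseries_sum (theta_coef a1 a2 b1 b2) (q0 z0 z1 z2) (q1 z0 z1 z2) (q2 z0 z1 z2) v.
Proof.
  pose proof rho_range as Hrho.
  destruct theta_partial_converges as [v Hv]. exists v. split; [exact Hv|]. split.
  - exists K. intros N. eapply Rle_trans; [apply box_abs_sum_grouped_le, theta_exp_range|].
    eapply Rle_trans; [|apply (sum_square_rho_le (4 * N))].
    apply sum_square_Rle; intros i j _ _. rewrite grouped_term_theta.
    rewrite <- (Rmult_1_r (rho ^ i * rho ^ j)), <- (pow_O rho).
    apply Cmod_theta_term_tail. lia.
  - apply (lim_geom_close (theta_partial a1 a2 b1 b2 z0 z1 z2) _ (fun N => 2 * N)%nat K (rho ^ 2) v); [simpl; split; nra|exact Hv|lia|].
    intros N. rewrite box_sum_theta_coef, theta_partial_square, <- pow_mult.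
    replace (2 * (2 * N))%nat with (4 * N)%nat by lia.
    rewrite <- Cmod_opp. replace (Copp _) with (Cminus (sum_square T (4 * N)) (sum_square (fun i j =>
      if Nat.leb (E0 i j) N && Nat.leb (E1 i j) N && Nat.leb (E2 i j) N then T i j else zero) (4 * N)))
      by ring.
    apply (sum_square_tail_le _ _ (fun i j => rho ^ i * rho ^ j));
      [intros; apply Rmult_le_pos; apply pow_le; lra|apply sum_square_rho_le|apply pow_le; lra|].
    intros i j Hp. apply Cmod_theta_term_tail.
    pose proof (sqZ_sub_le (twice_shift a1 (zigzag i)) (twice_shift a2 (zigzag j))).
    unfold E0, E1, E2, theta_exp0, theta_exp1, theta_exp2 in *.
    rewrite !Bool.andb_false_iff, !Nat.leb_gt in Hp. lia.
Qed.

End ThetaSeries.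

Theorem theta_expansion_exists a1 a2 b1 b2 : (a1 <= 1)%nat -> (a2 <= 1)%nat ->
  theta_expansion a1 a2 b1 b2 (theta_coef a1 a2 b1 b2).
Proof. intros Ha1 Ha2 z0 z1 z2 Hz. now apply theta_expansion_at. Qed.

Lemma q_surjective w0 w1 w2 : 0 < w0 < 1 -> 0 < w1 < 1 -> 0 < w2 < 1 ->
  exists z0 z1 z2, in_H2 z0 z1 z2 /\
    q0 z0 z1 z2 = RtoC w0 /\ q1 z0 z1 z2 = RtoC w1 /\ q2 z0 z1 z2 = RtoC w2.
Proof.
  intros H0 H1 H2. pose proof PI_RGT_0.
  set (L := fun w => - (4 / PI) * ln w).
  assert (HL : forall w, 0 < w < 1 -> 0 < L w).
  { intros w Hw. assert (ln w < 0) by (rewrite <- ln_1; apply ln_increasing; lra).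
    assert (0 < 4 / PI) by (apply Rdiv_lt_0_compat; lra). unfold L. nra. }
  assert (Hexp : forall w, 0 < w < 1 -> forall z, Re z = ln w -> Im z = 0 -> cexp z = RtoC w).
  { intros w Hw z Hre Him. rewrite cexp_real, Hre by exact Him. now rewrite exp_ln by lra. }
  pose proof (HL w0 H0). pose proof (HL w1 H1). pose proof (HL w2 H2).
  exists (0, L w0 + L w1), (0, - L w1), (0, L w2 + L w1).
  split; [|split; [|split]]; [split; simpl; nra|..];
    [unfold q0; apply (Hexp w0 H0)|unfold q1; apply (Hexp w1 H1)|unfold q2; apply (Hexp w2 H2)];
    simpl; unfold L; field; lra.
Qed.

Theorem theta_expansion_unique a1 a2 b1 b2 c c' :
  theta_expansion a1 a2 b1 b2 c -> theta_expansion a1 a2 b1 b2 c' ->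
  forall n0 n1 n2, c n0 n1 n2 = c' n0 n1 n2.
Proof.
  intros Hc Hc'.
  set (d := fun n0 n1 n2 => Cminus (c n0 n1 n2) (c' n0 n1 n2)).
  destruct (q_surjective (/ 2) (/ 2) (/ 2)) as [z0 [z1 [z2 [Hz [E0 [E1 E2]]]]]]; try lra.
  destruct (Hc z0 z1 z2 Hz) as [v [_ [[M HM] _]]].
  destruct (Hc' z0 z1 z2 Hz) as [v' [_ [[M' HM'] _]]].
  rewrite E0, E1, E2 in HM, HM'.
  assert (Hd : forall n0 n1 n2, d n0 n1 n2 = RtoC 0).
  { apply (pseries_coef_eq0 d (M + M')).
    - intros n0 n1 n2. unfold d.
      pose proof (pseries_sum_coef_le c (/ 2) M n0 n1 n2 ltac:(lra) HM).
      pose proof (pseries_sum_coef_le c' (/ 2) M' n0 n1 n2 ltac:(lra) HM').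
      pose proof (Cmod_triangle (c n0 n1 n2) (Copp (c' n0 n1 n2))) as Htri.
      rewrite Cmod_opp in Htri.
      assert (0 <= (/ 2) ^ n0 * (/ 2) ^ n1 * (/ 2) ^ n2)
        by (repeat apply Rmult_le_pos; apply pow_le; lra).
      apply Rmult_le_compat_r with (r := (/ 2) ^ n0 * (/ 2) ^ n1 * (/ 2) ^ n2) in Htri; [|lra].
      unfold Cminus. lra.
    - intros u0 u1 u2 H0 H1 H2.
      destruct (q_surjective u0 u1 u2 H0 H1 H2) as [y0 [y1 [y2 [Hy [F0 [F1 F2]]]]]].
      destruct (Hc y0 y1 y2 Hy) as [t [Ht [_ Hl]]].
      destruct (Hc' y0 y1 y2 Hy) as [t' [Ht' [_ Hl']]].
      rewrite F0, F1, F2 in Hl, Hl'.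
      assert (t = t') by exact (filterlim_locally_unique _ _ _ Ht Ht'). subst t'.
      replace (RtoC 0) with (Cminus t t) by ring.
      eapply filterlim_ext; [intros N; symmetry; apply box_sum_Cminus|].
      now apply filterlim_Cminus. }
  intros n0 n1 n2. specialize (Hd n0 n1 n2). unfold d in Hd.
  replace (c n0 n1 n2) with (Cplus (Cminus (c n0 n1 n2) (c' n0 n1 n2)) (c' n0 n1 n2)) by ring.
  rewrite Hd. ring.
Qed.

(** * The lowest coefficients *)

Lemma theta_phase_Re a1 a2 b1 b2 g1 g2 :
  Re (theta_phase a1 a2 b1 b2 g1 g2) =
  cos (PI * (INR b1 * IZR (twice_shift a1 g1) + INR b2 * IZR (twice_shift a2 g2)) / 2).
Proof.
  unfold theta_phase, theta_term. rewrite !IZR_twice_shift.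
  match goal with |- Re (cexp ?w) = _ =>
    change (Re (cexp w)) with (exp (Re w) * cos (Im w));
    replace (Re w) with 0 by (simpl; ring); replace (Im w) with
      (PI * (INR b1 * (IZR g1 + INR a1 / 2) + INR b2 * (IZR g2 + INR a2 / 2))) by (simpl; ring)
  end.
  rewrite exp_0, Rmult_1_l. f_equal. field.
Qed.

Lemma lowest_exponent_signs a1 a2 u1 u2 : (a1 <= 1)%nat -> (a2 <= 1)%nat ->
  sqZ u1 = a1 -> sqZ (u1 - u2) = (a1 + a2 - 2 * a1 * a2)%nat -> sqZ u2 = a2 ->
  exists s, (s = 1 \/ s = -1)%Z /\ u1 = (s * Z.of_nat a1)%Z /\ u2 = (s * Z.of_nat a2)%Z.
Proof.
  intros Ha1 Ha2 H1 H12 H2. rewrite sqZ_eq_iff in H1, H12, H2.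
  assert (Hsq : forall u, (u * u = 1 -> u = 1 \/ u = -1)%Z) by (intros; nia).
  assert (Hsq0 : forall u, (u * u = 0 -> u = 0)%Z) by (intros; nia).
  assert (E1 : a1 = 0%nat \/ a1 = 1%nat) by lia. assert (E2 : a2 = 0%nat \/ a2 = 1%nat) by lia.
  destruct E1, E2; subst; simpl in *.
  - exists 1%Z. split; [now left|]. split; lia.
  - exists u2. split; [now apply Hsq|]. split; lia.
  - exists u1. split; [now apply Hsq|]. split; lia.
  - exists u1. split; [now apply Hsq|]. assert (u1 - u2 = 0)%Z by now apply Hsq0. split; lia.
Qed.

Lemma cos_half_pi_even k : (k <= 2)%nat -> Nat.even k = true ->
  cos (PI * INR k / 2) = 1 \/ cos (PI * INR k / 2) = -1.
Proof.
  intros Hk Heven. destruct k as [|[|[|k]]]; try discriminate; try lia; simpl INR.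
  - left. rewrite Rmult_0_r, Rdiv_0_l. apply cos_0.
  - right. replace (PI * (1 + 1) / 2) with PI by field. apply cos_PI.
Qed.

(* At the lowest exponents [u = s a] for a common sign [s], so [b.u / 2 = s (a1 b1 + a2 b2) / 2]. *)
Lemma theta_phase_lowest_Re a1 a2 b1 b2 i j : (a1 <= 1)%nat -> (a2 <= 1)%nat ->
  at_exponent (theta_exp0 a1 a2) (theta_exp1 a1 a2) (theta_exp2 a1 a2) i j
    a1 (a1 + a2 - 2 * a1 * a2) a2 = true ->
  Re (theta_phase a1 a2 b1 b2 (zigzag i) (zigzag j)) = cos (PI * INR (a1 * b1 + a2 * b2) / 2).
Proof.
  intros Ha1 Ha2 Hij. unfold at_exponent in Hij.
  rewrite !Bool.andb_true_iff, !Nat.eqb_eq in Hij. destruct Hij as [[H0 H1] H2].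
  destruct (lowest_exponent_signs a1 a2 _ _ Ha1 Ha2 H0 H1 H2) as [s [Hs [Hu1 Hu2]]].
  rewrite theta_phase_Re, Hu1, Hu2, !mult_IZR, <- !INR_IZR_INZ, plus_INR, !mult_INR.
  destruct Hs as [-> | ->]; simpl IZR; [f_equal; field|].
  rewrite <- cos_neg. f_equal. field.
Qed.

Lemma theta_coef_lowest_neq0 a1 a2 b1 b2 :
  (a1 <= 1)%nat -> (a2 <= 1)%nat -> (b1 <= 1)%nat -> (b2 <= 1)%nat ->
  Nat.even (a1 * b1 + a2 * b2) = true ->
  theta_coef a1 a2 b1 b2 a1 (a1 + a2 - 2 * a1 * a2) a2 <> RtoC 0.
Proof.
  intros Ha1 Ha2 Hb1 Hb2 Heven.
  set (n1 := (a1 + a2 - 2 * a1 * a2)%nat).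
  set (at_low := at_exponent (theta_exp0 a1 a2) (theta_exp1 a1 a2) (theta_exp2 a1 a2)).
  set (eps := cos (PI * INR (a1 * b1 + a2 * b2) / 2)).
  assert (Heps : eps = 1 \/ eps = -1) by (apply cos_half_pi_even; [nia|exact Heven]).
  set (S := sum_square (fun i j => if at_low i j a1 n1 a2 then 1 else 0) (2 * (a1 + a2))).
  assert (HRe : Re (theta_coef a1 a2 b1 b2 a1 n1 a2) = eps * S).
  { unfold theta_coef, grouped_coef, S. fold at_low.
    rewrite Re_sum_square, <- sum_square_Rmult_l. symmetry.
    apply sum_square_ext; intros i j _ _.
    destruct (at_low i j a1 n1 a2) eqn:E; [|apply Rmult_0_r].
    rewrite (theta_phase_lowest_Re a1 a2 b1 b2 i j Ha1 Ha2 E). apply Rmult_1_r. }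
  assert (HS : 1 <= S).
  { assert (H00 : at_low 0%nat 0%nat a1 n1 a2 = true).
    { unfold at_low, at_exponent, theta_exp0, theta_exp1, theta_exp2, n1, twice_shift.
      change (zigzag 0) with 0%Z. rewrite !Bool.andb_true_iff, !Nat.eqb_eq, !sqZ_eq_iff.
      assert (E1 : a1 = 0%nat \/ a1 = 1%nat) by lia. assert (E2 : a2 = 0%nat \/ a2 = 1%nat) by lia.
      destruct E1, E2; subst; simpl; lia. }
    assert (Hnn : forall i j, 0 <= (if at_low i j a1 n1 a2 then 1 else 0))
      by (intros; destruct (at_low i j a1 n1 a2); lra).
    unfold S, sum_square.
    eapply Rle_trans; [|apply (sum_n_term_le _ _ 0%nat); [lia|intros; apply sum_n_nonneg; auto]].
    eapply Rle_trans; [|apply (sum_n_term_le _ _ 0%nat); [lia|auto]].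
    cbv beta. rewrite H00. lra. }
  intros H. apply (f_equal Re) in H. rewrite HRe in H. simpl in H.
  destruct Heps as [-> | ->]; lra.
Qed.

Lemma theta_exp_lower_bounds a1 a2 i j : (a1 <= 1)%nat -> (a2 <= 1)%nat ->
  (a1 <= theta_exp0 a1 a2 i j)%nat /\ (a1 + a2 - 2 * a1 * a2 <= theta_exp1 a1 a2 i j)%nat /\
  (a2 <= theta_exp2 a1 a2 i j)%nat.
Proof.
  intros Ha1 Ha2. unfold theta_exp0, theta_exp1, theta_exp2, twice_shift.
  assert (Hodd : forall u, (u <> 0)%Z -> (1 <= sqZ u)%nat).
  { intros u Hu. unfold sqZ. apply Nat2Z.inj_le. rewrite Z2Nat.id by apply Z.square_nonneg. nia. }
  assert (E1 : a1 = 0%nat \/ a1 = 1%nat) by lia. assert (E2 : a2 = 0%nat \/ a2 = 1%nat) by lia.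
  destruct E1, E2; subst; repeat split; try lia; apply Hodd; lia.
Qed.

Lemma theta_coef_support a1 a2 b1 b2 n0 n1 n2 : (a1 <= 1)%nat -> (a2 <= 1)%nat ->
  theta_coef a1 a2 b1 b2 n0 n1 n2 <> RtoC 0 ->
  (a1 <= n0)%nat /\ (a1 + a2 - 2 * a1 * a2 <= n1)%nat /\ (a2 <= n2)%nat.
Proof.
  intros Ha1 Ha2 Hc. destruct (grouped_coef_support _ _ _ _ n0 n1 n2 Hc) as [i [j Hij]].
  unfold at_exponent in Hij. rewrite !Bool.andb_true_iff, !Nat.eqb_eq in Hij.
  destruct Hij as [[<- <-] <-]. now apply theta_exp_lower_bounds.
Qed.

Theorem lemma2p3 (a1 a2 b1 b2 : nat)
  (Ha1 : (a1 <= 1)%nat) (Ha2 : (a2 <= 1)%nat)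
  (Hb1 : (b1 <= 1)%nat) (Hb2 : (b2 <= 1)%nat)
  (Heven : Nat.even (a1 * b1 + a2 * b2) = true) :
  (exists c, theta_expansion a1 a2 b1 b2 c) /\
  (forall c, theta_expansion a1 a2 b1 b2 c ->
     mult_q0 c a1 /\ mult_q2 c a2 /\ mult_q1 c (a1 + a2 - 2 * a1 * a2)%nat).
Proof.
  pose proof (theta_expansion_exists a1 a2 b1 b2 Ha1 Ha2) as Hex.
  split; [now exists (theta_coef a1 a2 b1 b2)|].
  intros c Hc.
  assert (Hceq : c = theta_coef a1 a2 b1 b2).
  { do 3 (apply functional_extensionality; intros).
    now apply (theta_expansion_unique a1 a2 b1 b2). }
  subst c.
  pose proof (theta_coef_lowest_neq0 a1 a2 b1 b2 Ha1 Ha2 Hb1 Hb2 Heven) as Hlow.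
  pose proof (fun n0 n1 n2 => theta_coef_support a1 a2 b1 b2 n0 n1 n2 Ha1 Ha2) as Hsupp.
  repeat split; [exists (a1 + a2 - 2 * a1 * a2)%nat, a2 | | exists a1, (a1 + a2 - 2 * a1 * a2)%nat | |
                 exists a1, a2 | ]; try exact Hlow; intros n0 n1 n2 Hn; apply Hsupp in Hn; lia.
Qed.
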